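(* For every $\sigma\in\mathrm{NC}_n$, the set $\mathrm{Red}_{\mathrm{NC}}(\sigma)$ of noncrossing reduced words of $\sigma$ is a commutation class in $\mathrm{Red}(\sigma)$; that is, $\mathrm{Red}_{\mathrm{NC}}(\sigma)\neq\emptyset$, and a word lies in $\mathrm{Red}_{\mathrm{NC}}(\sigma)$ if and only if it can be obtained from some (equivalently any) element of $\mathrm{Red}_{\mathrm{NC}}(\sigma)$ by a finite sequence of commutation moves $\mathbf a\,ij\,\mathbf b\leftrightarrow\mathbf a\,ji\,\mathbf b$ with $|i-j|>1$.
   Context: $\mathrm{Red}(\sigma)$ is the set of reduced words $(i_1,\dots,i_\ell)$, $\ell=\ell(\sigma)$, with $\sigma=s_{i_1}\cdots s_{i_\ell}$, where $s_i=(i,i+1)$. A set partition of $[n]$ is noncrossing if there are no distinct blocks $P,Q$ with $a,b\in P$, $c,d\in Q$, $a<c<b<d$; to it associate $\sigma\in S_n$ acting on each block $\{a_1<\dots<a_p\}$ by $\sigma(a_j)=a_{j-1}$ ($j\ge2$), $\sigma(a_1)=a_p$; $\mathrm{NC}_n$ is the set of these permutations. For $\sigma\in\mathrm{NC}_n$, $i$ is a noncrossing descent if $\sigma s_i\in\mathrm{NC}_n$ and $\ell(\sigma s_i)<\ell(\sigma)$. A noncrossing reduced word of $\sigma$ is a word $(i_1,\dots,i_\ell)$ with $\sigma=s_{i_1}\cdots s_{i_\ell}$ such that for every $1\le k\le\ell$, $s_{i_1}\cdots s_{i_k}\in\mathrm{NC}_n$ and $i_k$ is a noncrossing descent of $s_{i_1}\cdots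 s_{i_k}$. *)

From Stdlib Require Import Relations.
From mathcomp Require Import all_boot all_fingroup.
Set Implicit Arguments. Unset Strict Implicit. Unset Printing Implicit Defensive.

(* Conventions: [n] is represented by 'I_n = {0,...,n-1} (0-based).
   Permutations are composed as functions: pcomp p q = p o q
   (MathComp's  q * p  means "apply q, then p"... see permM). *)

Section NC.
Variable n : nat.

Definition pcomp (p q : 'S_n) : 'S_n := (q * p)%g.

Definition valid_letter (i : nat) : bool := i.+1 < n.
Definition stp (i : nat) : 'S_n :=
  if insub i : option 'I_n is Some a then
    if insub i.+1 : option 'I_n is Some b then tperm a b else 1%g
  else 1%g.

Definition wprod (w : seq nat) : 'S_n := foldr (fun i acc => pcomp (stp i) acc) (1%g : 'S_n) w.

(* Coxeter length = number of inversions *)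
Definition perm_length (s : 'S_n) : nat :=
  #|[set ij : 'I_n * 'I_n | (ij.1 < ij.2) && (s ij.2 < s ij.1)]|.

Definition Red (s : 'S_n) (w : seq nat) : Prop :=
  all valid_letter w /\ size w = perm_length s /\ wprod w = s.

Definition noncrossing (P : {set {set 'I_n}}) : bool :=
  [forall B in P, forall C in P, (B != C) ==>
     [forall a in B, forall b in B, forall c in C, forall d in C,
        ~~ [&& a < c, c < b & b < d]]].

Definition nc_partition (P : {set {set 'I_n}}) : bool :=
  partition P [set: 'I_n] && noncrossing P.

(* y is the image of x under the cyclic permutation of block B sending
   a_j to a_{j-1} (j >= 2) and a_1 to a_p, where B = {a_1 < ... < a_p} *)
Definition block_image (B : {set 'I_n}) (x y : 'I_n) : bool :=
  if [exists z in B, z < x]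
  then [&& y \in B, y < x & [forall z in B, ~~ ((y < z) && (z < x))]]
  else (y \in B) && [forall z in B, z <= y].

Definition assoc_perm (P : {set {set 'I_n}}) (s : 'S_n) : Prop :=
  forall B, B \in P -> forall x, x \in B -> block_image B x (s x).

Definition NCperm (s : 'S_n) : Prop :=
  exists P : {set {set 'I_n}}, nc_partition P /\ assoc_perm P s.

Definition nc_descent (s : 'S_n) (i : nat) : Prop :=
  NCperm (pcomp s (stp i)) /\ perm_length (pcomp s (stp i)) < perm_length s.

Definition RedNC (s : 'S_n) (w : seq nat) : Prop :=
  all valid_letter w /\ wprod w = s /\
  forall k, 1 <= k <= size w ->
    NCperm (wprod (take k w)) /\ nc_descent (wprod (take k w)) (nth 0 w k.-1).

End NC.

Definition comm_move (w w' : seq nat) : Prop :=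
  exists (a b : seq nat) (i j : nat),
    (i.+1 < j \/ j.+1 < i) /\ w = a ++ [:: i; j] ++ b /\ w' = a ++ [:: j; i] ++ b.

(* Write s in NC_n through its blocks, each a cycle sending an element to its
   predecessor.  For such s, i is a noncrossing descent exactly when either
   s (i+1) = i < s i (i is the least element of its block and i+1 the next
   one; s s_i splits off {i}) or s i = i and s (i+1) < i (s s_i merges {i}
   into the block of i+1).  Consequently distinct noncrossing descents are
   never adjacent, so their transpositions commute and each stays a
   noncrossing descent after the other is applied.  Every s <> 1 has a
   noncrossing descent: take a block whose two least elements a < b are
   closest; either b = a+1, or b-1 is a fixed point.  Induction on the
   length then yields a noncrossing reduced word, and connects any two:
   if they end in distinct letters i and j, both are connected to a word
   ending in j i, built on a noncrossing reduced word of s s_i s_j. *)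

From Stdlib Require Import Relations.
From mathcomp Require Import all_boot all_fingroup zify.
Set Implicit Arguments. Unset Strict Implicit. Unset Printing Implicit Defensive.

Section SimpleTranspositions.
Variable n : nat.
Implicit Types (s : 'S_n) (i j : nat).

Definition perm_nat s (x : nat) : nat :=
  if insub x is Some a then val (s a) else x.

Lemma perm_natE s (x : 'I_n) : perm_nat s x = s x.
Proof. by rewrite /perm_nat valK. Qed.

Lemma tperm_nat (a b x : 'I_n) :
  (tperm a b x : nat) = if x == a :> nat then b : nat else if x == b :> nat then a : nat else x.
Proof.
rewrite !val_eqE; case: tpermP => [->|->|xa xb]; rewrite ?eqxx //; first by case: eqP => [->|].
by move/eqP/negPf: xa => ->; move/eqP/negPf: xb => ->.
Qed.

Lemma stp_tperm (a b : 'I_n) : b = a.+1 :> nat -> stp n a = tperm a b.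
Proof.
move=> ab; rewrite /stp valK; case: insubP => [b' _ vb'|]; last by rewrite -ab ltn_ord.
by congr tperm; apply: val_inj; rewrite /= vb' ab.
Qed.

Lemma pcomp_stp_tperm s (a b x : 'I_n) : b = a.+1 :> nat ->
  pcomp s (stp n a) x = s (tperm a b x).
Proof. by move=> ab; rewrite (stp_tperm ab) /pcomp permM. Qed.

Lemma stp_invalid i : ~~ (i.+1 < n) -> stp n i = 1%g.
Proof.
move=> Hi; rewrite /stp; case: insubP => [a _ _|] //.
by case: insubP => [b Hb _|] //; rewrite Hb in Hi.
Qed.

Lemma stp_valid i : i.+1 < n ->
  exists a b : 'I_n, [/\ a = i :> nat, b = i.+1 :> nat & stp n i = tperm a b].
Proof.
move=> Hi; exists (Ordinal (ltnW Hi)), (Ordinal Hi).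
by split => //; rewrite -(stp_tperm (a := Ordinal (ltnW Hi))).
Qed.

Lemma stp2 i : (stp n i * stp n i = 1)%g.
Proof.
have [Hi|Hi] := boolP (i.+1 < n); last by rewrite stp_invalid // mulg1.
by have [a [b [_ _ ->]]] := stp_valid Hi; rewrite tperm2.
Qed.

Lemma pcomp_stpK s i : pcomp (pcomp s (stp n i)) (stp n i) = s.
Proof. by rewrite /pcomp mulgA stp2 mul1g. Qed.

Lemma stp_commute i j : i.+1 < j \/ j.+1 < i -> commute (stp n i) (stp n j).
Proof.
move=> far.
have [Hi|Hi] := boolP (i.+1 < n); last by rewrite stp_invalid //; apply/commute_sym/commute1.
have [Hj|Hj] := boolP (j.+1 < n); last by rewrite (stp_invalid Hj); apply: commute1.
have [a [b [va vb ->]]] := stp_valid Hi; have [c [d [vc vd ->]]] := stp_valid Hj.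
apply/permP => x; apply: val_inj => /=; rewrite !permM !tperm_nat va vb vc vd.
move: (nat_of_ord x) => v.
case E1: (v == i); case E2: (v == i.+1); case E3: (v == j); case E4: (v == j.+1);
  by rewrite /= ?E1 ?E2 ?E3 ?E4; do ?[case: eqP => ?]; lia.
Qed.

Lemma pcomp_stpC s i j : i.+1 < j \/ j.+1 < i ->
  pcomp (pcomp s (stp n i)) (stp n j) = pcomp (pcomp s (stp n j)) (stp n i).
Proof. by move=> far; rewrite /pcomp !mulgA (stp_commute far). Qed.

Lemma wprod_rcons w i : wprod n (rcons w i) = pcomp (wprod n w) (stp n i).
Proof. by elim: w => [|x w IH] /=; rewrite /pcomp ?IH ?mulgA // mulg1 mul1g. Qed.

Lemma perm_nat_stp_far s i j : i.+1 < j \/ j.+1 < i ->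
  perm_nat (pcomp s (stp n i)) j = perm_nat s j /\
  perm_nat (pcomp s (stp n i)) j.+1 = perm_nat s j.+1.
Proof.
move=> far; have [Hi|Hi] := boolP (i.+1 < n); last by rewrite stp_invalid /pcomp ?mul1g.
have [a [b [va vb ->]]] := stp_valid Hi.
suff E x : x != i -> x != i.+1 -> perm_nat (pcomp s (tperm a b)) x = perm_nat s x.
  by split; apply: E; apply/eqP; lia.
rewrite /perm_nat /pcomp; case: insubP => // y _ vy xi xi1.
by rewrite permM tpermD // -val_eqE /= ?va ?vb vy eq_sym.
Qed.

Lemma perm_length1 : perm_length (1 : 'S_n) = 0.
Proof.
apply/eqP; rewrite cards_eq0; apply/eqP/setP => -[x y].
by rewrite !inE /= !perm1; case: ltngtP.
Qed.

Lemma perm_length_stp s (a b : 'I_n) : b = a.+1 :> nat ->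
  (perm_length (pcomp s (stp n a)) < perm_length s) = (s b < s a).
Proof.
move=> ab; rewrite (stp_tperm ab) /pcomp /perm_length.
set inv := fun p : 'S_n => [set ij : 'I_n * 'I_n | (ij.1 < ij.2) && (p ij.2 < p ij.1)].
rewrite -!/(inv _); set t := tperm a b.
pose f p : 'I_n * 'I_n := (t p.1, t p.2).
have f_inj : injective f.
  by move=> [x y] [x' y'] [] /(congr1 t) + /(congr1 t); rewrite !tpermK => -> ->.
(* swapping the adjacent positions a, b preserves every inversion but (a, b) *)
have inv_ts : inv (t * s)%g :\ (a, b) = f @^-1: (inv s :\ (a, b)).
  apply/setP => -[x y]; rewrite !inE /= !permM !andbA; congr (_ && _).
  rewrite /f /= !xpair_eqE -!val_eqE /= !tperm_nat ab.
  move: (nat_of_ord x) (nat_of_ord y) (nat_of_ord a) => u v i.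
  case E1: (u == i); case E2: (u == i.+1); case E3: (v == i); case E4: (v == i.+1);
    by rewrite /= ?E1 ?E2 ?E3 ?E4; do ?[case: eqP => ?]; lia.
have := cardsD1 (a, b) (inv (t * s)%g); have := cardsD1 (a, b) (inv s).
rewrite inv_ts card_preimset // !inE /= !permM /t tpermL tpermR /= => -> ->.
have : s a != s b by rewrite (inj_eq perm_inj) -val_eqE /= ab neq_ltn ltnSn.
rewrite -val_eqE /= ab ltnSn /=; case: ltngtP => //; lia.
Qed.

End SimpleTranspositions.

Section Blocks.
Variable n : nat.
Implicit Types (s : 'S_n) (B : {set 'I_n}) (x y z : 'I_n).

Lemma block_image_prev B x y : y \in B -> y < x ->
  {in B, forall z, ~~ ((y < z) && (z < x))} -> block_image B x y.
Proof.
move=> yB yx between; rewrite /block_image yB yx.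
have -> : [exists z in B, z < x] by apply/existsP; exists y; rewrite yB.
by apply/forallP => z; apply/implyP/between.
Qed.

Lemma block_image_wrap B x y : y \in B -> {in B, forall z, x <= z} ->
  {in B, forall z, z <= y} -> block_image B x y.
Proof.
move=> yB xmin ymax; rewrite /block_image yB.
have -> : [exists z in B, z < x] = false.
  by apply/existsP => -[z /andP [/xmin]]; rewrite ltnNge => ->.
by apply/forallP => z; apply/implyP/ymax.
Qed.

Lemma block_image_mem B x y : block_image B x y -> y \in B.
Proof. by rewrite /block_image; case: ifP => _ /andP []. Qed.

Lemma block_image_prevP B x y z : block_image B x y -> z \in B -> z < x ->
  y < x /\ {in B, forall z, ~~ ((y < z) && (z < x))}.
Proof.
rewrite /block_image => + zB zx.
have -> : [exists z in B, z < x] by apply/existsP; exists z; rewrite zB.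
by case/and3P => _ -> /forallP between; split => // w wB; have := between w; rewrite wB.
Qed.

Lemma block_image_wrapP B x y : block_image B x y -> {in B, forall z, x <= z} ->
  {in B, forall z, z <= y}.
Proof.
move=> + xmin; rewrite /block_image.
have -> : [exists z in B, z < x] = false.
  by apply/existsP => -[z /andP [/xmin]]; rewrite ltnNge => ->.
by case/andP => _ /forallP ymax z zB; have := ymax z; rewrite zB.
Qed.

Record nc_blocks s (blk : 'I_n -> {set 'I_n}) : Prop := NCBlocks {
  mem_blk : forall x, x \in blk x;
  blk_eq : forall x y, y \in blk x -> blk y = blk x;
  blk_image : forall x, block_image (blk x) x (s x);
  blk_noncrossing : forall x y p q r u, blk x != blk y ->
    p \in blk x -> q \in blk x -> r \in blk y -> u \in blk y -> ~~ [&& p < r, r < q & q < u]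
}.

Lemma NCpermP s : NCperm s <-> exists blk, nc_blocks s blk.
Proof.
split.
- case=> P [/andP [/and3P [/eqP coverP trivP _] ncP] assocP].
  have xP x : x \in cover P by rewrite coverP inE.
  exists (pblock P); split => [x|x y|x|x y p q r u neq pB qB rB uB].
  + by rewrite mem_pblock.
  + exact: same_pblock.
  + by apply: assocP; [apply: pblock_mem | rewrite mem_pblock].
  + move/forall_inP: ncP => /(_ _ (pblock_mem (xP x))) /forall_inP /(_ _ (pblock_mem (xP y))).
    rewrite neq /= => /forall_inP /(_ p pB) /forall_inP /(_ q qB).
    by move=> /forall_inP /(_ r rB) /forall_inP /(_ u uB).
- case=> blk [selfP sameP imageP ncP].
  exists [set blk x | x : 'I_n]; split; last first.
    by move=> _ /imsetP [y _ ->] x xB; rewrite -(sameP _ _ xB).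
  apply/andP; split; first apply/and3P; first split.
  + apply/eqP/setP => x; rewrite inE; apply/bigcupP; exists (blk x) => //.
    exact: imset_f.
  + apply/trivIsetP => _ _ /imsetP [x _ ->] /imsetP [y _ ->] neq.
    apply/pred0P => z /=; apply/negP => /andP [zx zy].
    by move/eqP: neq; apply; rewrite -(sameP _ _ zx) -(sameP _ _ zy).
  + by apply/imsetP => -[x _ E]; have := selfP x; rewrite -E inE.
  + apply/forall_inP => _ /imsetP [x _ ->]; apply/forall_inP => _ /imsetP [y _ ->].
    apply/implyP => neq; do 4!apply/forall_inP => ? ?; exact: ncP neq _ _ _ _.
Qed.


Section BlockStructure.
Variables (s : 'S_n) (blk : 'I_n -> {set 'I_n}).
Hypothesis hblk : nc_blocks s blk.

Lemma mem_blk_image x : s x \in blk x.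
Proof. exact: block_image_mem (blk_image hblk x). Qed.

Lemma blk_image_eq x : blk (s x) = blk x.
Proof. exact: (blk_eq hblk (mem_blk_image x)). Qed.

Lemma blk_min x : x <= s x -> {in blk x, forall z, x <= z}.
Proof.
move=> xsx z zB; rewrite leqNgt; apply/negP => zx.
by have [] := block_image_prevP (blk_image hblk x) zB zx; rewrite ltnNge xsx.
Qed.

Lemma blk_fixed x : s x = x -> blk x = [set x].
Proof.
move=> sxx; have xmin := blk_min (eq_leq (esym (congr1 val sxx))).
have xmax := block_image_wrapP (blk_image hblk x) xmin; rewrite sxx in xmax.
apply/setP => z; rewrite inE; apply/idP/eqP => [zB|->]; last exact: (mem_blk hblk).
by apply: val_inj; apply/eqP; rewrite eqn_leq xmax ?xmin.
Qed.

Lemma closed_subset_min c (W : {set 'I_n}) y : y \in W -> W \subset blk c ->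
  {in W, forall x, s x \in W} -> exists2 m, m \in W & {in blk c, forall z, m <= z}.
Proof.
move=> yW /subsetP Wc Wclosed.
have [m mW mmin] := arg_minnP (fun m : 'I_n => val m) yW.
exists m => // z zB; rewrite leqNgt; apply/negP => zm.
have := blk_image hblk m; rewrite (blk_eq hblk (Wc _ mW)) => /block_image_prevP.
by case/(_ z zB zm); rewrite ltnNge mmin //; apply: Wclosed.
Qed.

(* Each block is a single cycle of s: an s-closed proper subset and its
   complement in the block would both contain the least element. *)
Lemma closed_subset_blk c (Y : {set 'I_n}) y : y \in Y -> Y \subset blk c ->
  {in Y, forall x, s x \in Y} -> blk c \subset Y.
Proof.
move=> yY Yc Yclosed; apply/subsetP => x xB; apply/negPn/negP => xY.
have sY : s @: Y = Y.
  apply/eqP; rewrite eqEcard card_imset ?leqnn ?andbT; last exact: perm_inj.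
  by apply/subsetP => _ /imsetP [z zY ->]; apply: Yclosed.
have [m1 m1Y m1min] := closed_subset_min yY Yc Yclosed.
have [|||m2] := @closed_subset_min c (blk c :\: Y) x; first by rewrite !inE xY.
- exact: subsetDl.
- move=> z; rewrite !inE => /andP [zY zB]; rewrite -(blk_eq hblk zB) mem_blk_image andbT.
  by apply: contra zY; rewrite -{1}sY (mem_imset _ _ perm_inj).
rewrite !inE => /andP [m2Y m2B] m2min.
suff E : m1 = m2 by rewrite -E m1Y in m2Y.
by apply: val_inj; apply/eqP; rewrite eqn_leq m1min // m2min // (subsetP Yc).
Qed.

End BlockStructure.
End Blocks.

Lemma nc_descent_shape n (s : 'S_n) (a b : 'I_n) blk blk' : b = a.+1 :> nat ->
  nc_blocks s blk -> nc_blocks (pcomp s (stp n a)) blk' -> s b < s a ->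
  (s b = a :> nat /\ a < s a) \/ (s a = a :> nat /\ s b < a).
Proof.
move=> ab hblk hblk' sba; have a_lt_b : a < b by rewrite ab.
have [bB|bB] := boolP (b \in blk a).
  have := blk_image hblk b; rewrite (blk_eq hblk bB) => /block_image_prevP.
  by case/(_ a (mem_blk hblk a) a_lt_b) => sbb /(_ a (mem_blk hblk a)); left; lia.
have [aB'|aB'] := boolP (a \in blk' b).
  have := blk_image hblk' b; rewrite (pcomp_stp_tperm _ _ ab) tpermR => /block_image_prevP.
  by case/(_ a aB' a_lt_b) => sab /(_ a aB'); right; lia.
(* Otherwise blk' b :&: blk a is s-closed, as s and s s_a agree off {a, b};
   it contains s a but not a. *)
suff : blk a \subset blk' b :&: blk a.
  by move/subsetP/(_ a (mem_blk hblk a)); rewrite inE (negPf aB').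
apply: (closed_subset_blk hblk (y := s a)); last 1 first.
- move=> y; rewrite inE => /andP [yB' yB].
  have ya : a != y by apply: contraNneq aB' => ->.
  have yb : b != y by apply: contraNneq bB => ->.
  rewrite inE -(blk_eq hblk' yB') -(blk_eq hblk yB) (mem_blk_image hblk) andbT.
  by have := mem_blk_image hblk' y; rewrite (pcomp_stp_tperm _ _ ab) tpermD.
- rewrite inE mem_blk_image // andbT.
  by have := mem_blk_image hblk' b; rewrite (pcomp_stp_tperm _ _ ab) tpermR.
- exact: subsetIr.
Qed.

Section SplitBlock.
Variables (n : nat) (s : 'S_n) (blk : 'I_n -> {set 'I_n}) (a b : 'I_n).
Hypotheses (hblk : nc_blocks s blk) (ab : b = a.+1 :> nat) (sba : s b = a) (asa : a < s a).

Definition split_blk x := if x == a then [set a] else if x \in blk a then blk a :\ a else blk x.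

Let b_blk : b \in blk a.
Proof. by rewrite -sba (blk_image_eq hblk) (mem_blk hblk). Qed.

Let a_min : {in blk a, forall z : 'I_n, a <= z}.
Proof. exact: (blk_min hblk (ltnW asa)). Qed.

Let split_blk_a : split_blk a = [set a].
Proof. by rewrite /split_blk eqxx. Qed.

Let split_blk_in x : x \in blk a -> x != a -> split_blk x = blk a :\ a.
Proof. by move=> xB xa; rewrite /split_blk (negPf xa) xB. Qed.

Let split_blk_out x : x \notin blk a -> split_blk x = blk x.
Proof.
move=> xB; have xa : x != a by apply: contraNneq xB => ->; exact: (mem_blk hblk).
by rewrite /split_blk (negPf xa) (negPf xB).
Qed.

Let split_blk_sub x : split_blk x \subset blk x.
Proof.
have [->|xa] := eqVneq x a; first by rewrite split_blk_a sub1set (mem_blk hblk).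
have [xB|xB] := boolP (x \in blk a); last by rewrite split_blk_out.
by rewrite split_blk_in // (blk_eq hblk xB) subsetDl.
Qed.

Lemma split_blk_image x : block_image (split_blk x) x (pcomp s (stp n a) x).
Proof.
rewrite (pcomp_stp_tperm _ _ ab).
have [->|xa] := eqVneq x a.
  by rewrite tpermL sba split_blk_a; apply: block_image_wrap; rewrite ?set11 // => z /set1P ->.
have [->|xb] := eqVneq x b.
  rewrite tpermR split_blk_in //; last by rewrite -val_eqE /= ab neq_ltn ltnSn orbT.
  apply: block_image_wrap.
  - by rewrite !inE mem_blk_image // andbT -val_eqE /= neq_ltn asa orbT.
  - by move=> z; rewrite !inE -val_eqE ab => /andP [za /a_min]; rewrite /= leq_eqVlt eq_sym (negPf za).
  - by move=> z /setD1P [_]; apply: block_image_wrapP (blk_image hblk a) a_min z.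
rewrite tpermD 1?eq_sym //.
have [xB|xB] := boolP (x \in blk a); last by rewrite split_blk_out // (blk_image hblk).
rewrite split_blk_in //.
have := blk_image hblk x; rewrite (blk_eq hblk xB) => /block_image_prevP.
case/(_ a (mem_blk hblk a)) => [|sxx between].
  by rewrite ltn_neqAle a_min // andbT eq_sym val_eqE xa.
apply: block_image_prev => // [|z /setD1P [_ /between] //].
rewrite !inE; have := mem_blk_image hblk x; rewrite (blk_eq hblk xB) => ->.
by rewrite andbT -sba (inj_eq perm_inj).
Qed.

Lemma split_blk_noncrossing x y p q r u : split_blk x != split_blk y ->
  p \in split_blk x -> q \in split_blk x -> r \in split_blk y -> u \in split_blk y ->
  ~~ [&& p < r, r < q & q < u].
Proof.
move=> neq pX qX rY uY; apply/negP => /and3P [pr rq qu].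
have sub z w : w \in split_blk z -> w \in blk z by apply/subsetP.
have [neq_blk|] := boolP (blk x != blk y).
  have := blk_noncrossing hblk neq_blk (sub _ _ pX) (sub _ _ qX) (sub _ _ rY) (sub _ _ uY).
  by rewrite pr rq qu.
(* x and y lie in the same block of s, now split into {a} and the rest;
   a singleton cannot cross anything *)
rewrite negbK => /eqP blk_xy.
have [xB|xB] := boolP (x \in blk a); last first.
  have yB : y \notin blk a.
    by apply: contra xB => yB; rewrite -(blk_eq hblk yB) -blk_xy (mem_blk hblk).
  by move: neq; rewrite !split_blk_out // blk_xy eqxx.
have yB : y \in blk a by rewrite -(blk_eq hblk xB) blk_xy (mem_blk hblk).
have [xa|xa] := eqVneq x a.
  by move: pX qX pr rq; rewrite xa split_blk_a => /set1P -> /set1P ->; lia.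
have [ya|ya] := eqVneq y a.
  by move: rY uY rq qu; rewrite ya split_blk_a => /set1P -> /set1P ->; lia.
by move: neq; rewrite !split_blk_in // eqxx.
Qed.

Lemma nc_blocks_split : nc_blocks (pcomp s (stp n a)) split_blk.
Proof.
split=> [x|x y||]; [| |exact: split_blk_image|exact: split_blk_noncrossing].
- have [->|xa] := eqVneq x a; first by rewrite split_blk_a set11.
  have [xB|xB] := boolP (x \in blk a); last by rewrite split_blk_out // (mem_blk hblk).
  by rewrite split_blk_in // !inE xa.
- have [->|xa] := eqVneq x a; first by rewrite split_blk_a inE => /eqP ->.
  have [xB|xB] := boolP (x \in blk a).
    by rewrite split_blk_in // !inE => /andP [ya yB]; rewrite split_blk_in.
  rewrite split_blk_out // => yx; rewrite split_blk_out ?(blk_eq hblk yx) //.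
  by apply: contra xB => yB; rewrite -(blk_eq hblk yB) (blk_eq hblk yx) (mem_blk hblk).
Qed.

End SplitBlock.

Section MergeBlocks.
Variables (n : nat) (s : 'S_n) (blk : 'I_n -> {set 'I_n}) (a b : 'I_n).
Hypotheses (hblk : nc_blocks s blk) (ab : b = a.+1 :> nat) (saa : s a = a) (sba : s b < a).

Definition merge_blk x := if (x == a) || (x \in blk b) then a |: blk b else blk x.

Let b_prev : s b < b /\ {in blk b, forall z : 'I_n, ~~ ((s b < z) && (z < b))}.
Proof.
by apply: (block_image_prevP (blk_image hblk b)) (mem_blk_image hblk b) _; rewrite ab; lia.
Qed.

Let merge_blk_in x : (x == a) || (x \in blk b) -> merge_blk x = a |: blk b.
Proof. by rewrite /merge_blk => ->. Qed.

Let merge_blk_out x : x != a -> x \notin blk b -> merge_blk x = blk x.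
Proof. by move=> xa xb; rewrite /merge_blk (negPf xa) (negPf xb). Qed.

Let other_blk x z : x != a -> x \notin blk b -> z \in blk x ->
  (z != a :> nat) && (z != b :> nat).
Proof.
move=> xa xC zx; apply/andP; split; apply/negP => /eqP/val_inj zE; subst z.
  have := blk_eq hblk zx; rewrite (blk_fixed hblk saa) => /setP /(_ x).
  by rewrite (mem_blk hblk) inE (negPf xa).
by move: xC; rewrite (blk_eq hblk zx) (mem_blk hblk).
Qed.

Lemma merge_blk_image x : block_image (merge_blk x) x (pcomp s (stp n a) x).
Proof.
have [sbb between_b] := b_prev.
rewrite (pcomp_stp_tperm _ _ ab).
have [->|xa] := eqVneq x a.
  rewrite tpermL merge_blk_in ?eqxx //; apply: block_image_prev => //.
    by rewrite !inE mem_blk_image ?orbT.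
  by move=> z /setU1P [->|/between_b]; [rewrite ltnn andbF | rewrite ab; lia].
have [->|xb] := eqVneq x b.
  rewrite tpermR saa merge_blk_in ?(mem_blk hblk) ?orbT //.
  by apply: block_image_prev => [||z]; rewrite ?setU11 ?ab //; lia.
rewrite tpermD 1?eq_sym //.
have [xC|xC] := boolP (x \in blk b); last by rewrite merge_blk_out // (blk_image hblk).
rewrite merge_blk_in ?xC ?orbT //.
have := blk_image hblk x; rewrite (blk_eq hblk xC) => sx_img.
have sxC : s x \in blk b by rewrite -(blk_eq hblk xC) (mem_blk_image hblk).
have [z /andP [zC zx]|xmin] := pickP [pred z | (z \in blk b) && (z < x)].
  have [sxx between_x] := block_image_prevP sx_img zC zx.
  apply: block_image_prev; rewrite ?inE ?sxC ?orbT // => w /setU1P [->|/between_x //].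
  have := between_x b (mem_blk hblk b); have : x != b :> nat by rewrite val_eqE.
  rewrite ab; lia.
have {}xmin : {in blk b, forall z : 'I_n, x <= z}.
  by move=> z zC; rewrite leqNgt; apply/negP => zx; have := xmin z; rewrite /= zC zx.
have sxmax := block_image_wrapP sx_img xmin.
apply: block_image_wrap; first by rewrite !inE sxC orbT.
- by move=> z /setU1P [->|/xmin //]; have := xmin _ (mem_blk_image hblk b); lia.
- by move=> z /setU1P [->|/sxmax //]; have := sxmax _ (mem_blk hblk b); rewrite ab; lia.
Qed.

(* nothing lies strictly between a and b, so a crossing through a is one through b *)
Let merge_rep p : p \in a |: blk b ->
  exists2 p', p' \in blk b & p' = p :> nat \/ (p = a :> nat /\ p' = b :> nat).
Proof.
case/setU1P => [->|pC]; first by exists b; [exact: (mem_blk hblk) | right].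
by exists p; [|left].
Qed.

Lemma merge_blk_noncrossing x y p q r u : merge_blk x != merge_blk y ->
  p \in merge_blk x -> q \in merge_blk x -> r \in merge_blk y -> u \in merge_blk y ->
  ~~ [&& p < r, r < q & q < u].
Proof.
move=> neq pX qX rY uY; apply/negP => /and3P [pr rq qu].
have [hx|hx] := boolP ((x == a) || (x \in blk b));
  have [hy|hy] := boolP ((y == a) || (y \in blk b)).
- by move: neq; rewrite !merge_blk_in // eqxx.
- move: hy; rewrite negb_or => /andP [ya yC]; rewrite merge_blk_out // in rY uY.
  move: pX qX; rewrite merge_blk_in // => /merge_rep [p' p'C hp] /merge_rep [q' q'C hq].
  have /andP [ra rb] := other_blk ya yC rY; have /andP [ua ub] := other_blk ya yC uY.
  have neq' : blk b != blk y by apply: contraNneq yC => ->; apply: (mem_blk hblk).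
  have := blk_noncrossing hblk neq' p'C q'C rY uY; rewrite ab in hp hq rb ub *; lia.
- move: hx; rewrite negb_or => /andP [xa xC]; rewrite merge_blk_out // in pX qX.
  move: rY uY; rewrite merge_blk_in // => /merge_rep [r' r'C hr] /merge_rep [u' u'C hu].
  have /andP [pa pb] := other_blk xa xC pX; have /andP [qa qb] := other_blk xa xC qX.
  have neq' : blk x != blk b by apply: contraNneq xC => <-; apply: (mem_blk hblk).
  have := blk_noncrossing hblk neq' pX qX r'C u'C; rewrite ab in hr hu pb qb *; lia.
- move: hx hy neq pX qX rY uY; rewrite !negb_or => /andP [xa xC] /andP [ya yC].
  rewrite !merge_blk_out // => neq pX qX rY uY.
  by have := blk_noncrossing hblk neq pX qX rY uY; rewrite pr rq qu.
Qed.

Lemma nc_blocks_merge : nc_blocks (pcomp s (stp n a)) merge_blk.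
Proof.
split => [x|x y||]; [| |exact: merge_blk_image|exact: merge_blk_noncrossing].
- have [hx|hx] := boolP ((x == a) || (x \in blk b)); first by rewrite merge_blk_in // in_setU1.
  by move: hx; rewrite negb_or => /andP [xa xC]; rewrite merge_blk_out // (mem_blk hblk).
- have [hx|hx] := boolP ((x == a) || (x \in blk b)).
    by rewrite merge_blk_in // => yx; rewrite merge_blk_in // -in_setU1.
  move: hx; rewrite negb_or => /andP [xa xC]; rewrite merge_blk_out // => yx.
  have ya : y != a.
    apply: contraNneq xa => ya; move: yx; rewrite ya => /(blk_eq hblk).
    by rewrite (blk_fixed hblk saa) => /setP /(_ x); rewrite (mem_blk hblk) inE => ->.
  have yC : y \notin blk b.
    by apply: contra xC => /(blk_eq hblk) <-; rewrite (blk_eq hblk yx) (mem_blk hblk).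
  by rewrite merge_blk_out // (blk_eq hblk yx).
Qed.

End MergeBlocks.

Section NoncrossingDescents.
Variable n : nat.
Implicit Types (s : 'S_n) (i : nat).

Definition nc_descentb s i :=
  ((perm_nat s i.+1 == i) && (i < perm_nat s i)) ||
  ((perm_nat s i == i) && (perm_nat s i.+1 < i)).

Lemma nc_descent_valid s i : nc_descent s i -> i.+1 < n.
Proof.
by case=> _; apply: contraLR => Hi; rewrite stp_invalid // /pcomp mul1g ltnn.
Qed.

Lemma nc_descentP s i : i.+1 < n -> NCperm s -> nc_descent s i <-> nc_descentb s i.
Proof.
move=> Hi /NCpermP [blk hblk]; have [a [b [<- ab _]]] := stp_valid Hi.
rewrite /nc_descentb.
have -> : perm_nat s a.+1 = s b by rewrite -ab perm_natE.
rewrite perm_natE; split.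
- case=> /NCpermP [blk' hblk']; rewrite (perm_length_stp s ab) => sba.
  by case: (nc_descent_shape ab hblk hblk' sba) => -[-> ->]; rewrite eqxx ?orbT.
- case/orP => [/andP [/eqP sba asa]|/andP [/eqP saa sba]].
    have {}sba : s b = a by apply: val_inj.
    split; last by rewrite (perm_length_stp s ab) sba.
    by apply/NCpermP; exists (split_blk blk a); exact: nc_blocks_split hblk ab sba asa.
  have {}saa : s a = a by apply: val_inj.
  split; last by rewrite (perm_length_stp s ab) saa.
  by apply/NCpermP; exists (merge_blk blk a b); exact: nc_blocks_merge hblk ab saa sba.
Qed.

Section DescentExistence.
Variables (s : 'S_n) (blk : 'I_n -> {set 'I_n}).
Hypothesis hblk : nc_blocks s blk.

Lemma blk_second x : s x != x -> exists2 b, b \in blk x & (s b < b) && (s b < s (s b)).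
Proof.
move=> sxx; have [m mB mmin] := arg_minnP (fun m : 'I_n => val m) (mem_blk hblk x).
have m_min : {in blk m, forall z : 'I_n, m <= z} by rewrite (blk_eq hblk mB).
have msm : m < s m.
  rewrite ltn_neqAle m_min ?(mem_blk_image hblk) // andbT val_eqE eq_sym.
  apply: contraNneq sxx => /(blk_fixed hblk); rewrite (blk_eq hblk mB) => Bm.
  by move: (mem_blk_image hblk x) (mem_blk hblk x); rewrite Bm => /set1P -> /set1P ->.
have bm : s ((s^-1)%g m) = m by rewrite permKV.
have bB : (s^-1)%g m \in blk m.
  by have := mem_blk hblk ((s^-1)%g m); rewrite -(blk_image_eq hblk) bm.
exists ((s^-1)%g m); first by rewrite -(blk_eq hblk mB).
rewrite bm msm andbT ltn_neqAle m_min //.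
by rewrite andbT; apply: contraTneq msm => /val_inj E; rewrite {2}E bm ltnn.
Qed.

Lemma blk_nested (b e : 'I_n) : s b < e < b -> e \notin blk b ->
  {in blk e, forall z : 'I_n, s b < z < b}.
Proof.
move=> /andP [ae eb] eB z ze.
have neq : blk e != blk b by apply: contraNneq eB => <-; apply: (mem_blk hblk).
have := blk_noncrossing hblk neq ze (mem_blk hblk e) (mem_blk_image hblk b) (mem_blk hblk b).
have neq' : blk b != blk e by rewrite eq_sym.
have := blk_noncrossing hblk neq' (mem_blk_image hblk b) (mem_blk hblk b) (mem_blk hblk e) ze.
have za : z != s b.
  apply: contraNneq eB => zE.
  by rewrite -(blk_image_eq hblk b) -zE (blk_eq hblk ze) (mem_blk hblk).
have zb : z != b by apply: contraNneq eB => zE; rewrite -zE (blk_eq hblk ze) (mem_blk hblk).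
move: za zb; rewrite -!val_eqE /=; lia.
Qed.

End DescentExistence.

Lemma nc_descent_exists s : NCperm s -> s != 1%g -> exists i, nc_descent s i.
Proof.
move=> Hs s1; have [blk hblk] := iffLR (NCpermP s) Hs.
have [x sxx] : exists x, s x != x.
  case: (pickP (fun x => s x != x)) => [x sxx|fixed]; first by exists x.
  by case/eqP: s1; apply/permP => x; rewrite perm1; apply/eqP/negbFE/fixed.
have [b0 _ Qb0] := blk_second hblk sxx.
have [b /andP [sbb asa] bmin] :=
  @arg_minnP _ b0 (fun b => (s b < b) && (s b < s (s b))) (fun b => b - s b) Qb0.
have [|gap|adj] := ltngtP b (s b).+1; first by lia.
- have [e eb] : exists e : 'I_n, e.+1 = b :> nat.
    by exists (Ordinal (leq_ltn_trans (leq_pred b) (ltn_ord b))); rewrite /= prednK //; lia.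
  have [_ between_b] := block_image_prevP (blk_image hblk b) (mem_blk_image hblk b) sbb.
  have see : s e = e.
    apply/eqP/negPn/negP => /(blk_second hblk) [b' b'E /andP [sb'b' Qb']].
    have eB : e \notin blk b by apply/negP => /between_b /=; lia.
    have e_gap : s b < e < b by rewrite /=; lia.
    have inside := blk_nested hblk e_gap eB.
    have sb'E : s b' \in blk e by rewrite -(blk_eq hblk b'E) (mem_blk_image hblk).
    have := bmin b'; rewrite /= sb'b' Qb' => /(_ isT).
    by have := inside _ b'E; have := inside _ sb'E; lia.
  exists e; apply/(nc_descentP _ Hs); first by rewrite eb ltn_ord.
  rewrite /nc_descentb eb !perm_natE see eqxx /=; lia.
- exists (s b); apply/(nc_descentP _ Hs); first by rewrite -adj ltn_ord.
  rewrite /nc_descentb; have -> : perm_nat s (s b).+1 = s b by rewrite -adj perm_natE.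
  by rewrite perm_natE eqxx asa.
Qed.

End NoncrossingDescents.

Section ReflTransClosure.
Variables (A : Type) (R : relation A).

Lemma clos_rt_sym : (forall x y, R x y -> R y x) ->
  forall x y, clos_refl_trans A R x y -> clos_refl_trans A R y x.
Proof.
move=> Rsym x y; elim=> {x y} [x y /Rsym|x|x y z _ IHxy _ IHyz]; first exact: rt_step.
  exact: rt_refl.
exact: rt_trans IHyz IHxy.
Qed.

Lemma clos_rt_map (f : A -> A) : (forall x y, R x y -> R (f x) (f y)) ->
  forall x y, clos_refl_trans A R x y -> clos_refl_trans A R (f x) (f y).
Proof.
move=> Rf x y; elim=> {x y} [x y /Rf|x|x y z _ IHxy _ IHyz]; first exact: rt_step.
  exact: rt_refl.
exact: rt_trans IHxy IHyz.
Qed.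

Lemma clos_rt_invariant (P : A -> Prop) : (forall x y, R x y -> P x -> P y) ->
  forall x y, clos_refl_trans A R x y -> P x -> P y.
Proof. by move=> RP x y; elim=> {x y} [x y /RP|//|x y z _ IHxy _ IHyz /IHxy/IHyz]. Qed.

End ReflTransClosure.

Lemma comm_move_sym w w' : comm_move w w' -> comm_move w' w.
Proof. by case=> a [b [i [j [far [-> ->]]]]]; exists a, b, j, i; split; first lia. Qed.

Lemma comm_move_rcons w w' x : comm_move w w' -> comm_move (rcons w x) (rcons w' x).
Proof.
by case=> a [b [i [j [far [-> ->]]]]]; exists a, (rcons b x), i, j; rewrite -!rcons_cat.
Qed.

Section NoncrossingWords.
Variable n : nat.
Implicit Types (s : 'S_n) (w : seq nat) (i j : nat).

Lemma nc_descent_far s i j : NCperm s -> nc_descent s i -> nc_descent s j -> i != j ->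
  i.+1 < j \/ j.+1 < i.
Proof.
move=> Hs Di Dj neq; have Hi := nc_descent_valid Di; have Hj := nc_descent_valid Dj.
move/(nc_descentP Hi Hs): Di; move/(nc_descentP Hj Hs): Dj; rewrite /nc_descentb.
(* for adjacent letters the conditions clash at the shared position *)
have [ij|ij|<-] := ltngtP i.+1 j; first by left.
  have [ji|ji|<-] := ltngtP j.+1 i; [by right | by move: neq; lia |].
  by move: (perm_nat s j) (perm_nat s j.+1) (perm_nat s j.+2) => x y z; lia.
by move: (perm_nat s i) (perm_nat s i.+1) (perm_nat s i.+2) => x y z; lia.
Qed.

Lemma nc_descent_stp_far s i j : i.+1 < j \/ j.+1 < i -> NCperm s ->
  NCperm (pcomp s (stp n i)) -> nc_descent s j -> nc_descent (pcomp s (stp n i)) j.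
Proof.
move=> far Hs Hsi Dj; have Hj := nc_descent_valid Dj.
apply/(nc_descentP Hj Hsi); move/(nc_descentP Hj Hs): Dj.
by rewrite /nc_descentb; case: (perm_nat_stp_far s far) => -> ->.
Qed.

Lemma RedNC_nil s : RedNC s [::] <-> s = 1%g.
Proof. by split=> [[_ [<-]] //|->]; do 2!split=> //; case. Qed.

Lemma RedNC_rcons s w i :
  RedNC s (rcons w i) <-> [/\ RedNC (pcomp s (stp n i)) w, NCperm s & nc_descent s i].
Proof.
have prefix k : k <= size w -> take k (rcons w i) = take k w.
  by move=> kw; rewrite -cats1 takel_cat.
have nth_prefix k : 0 < k <= size w -> nth 0 (rcons w i) k.-1 = nth 0 w k.-1.
  by move=> /andP [k0 kw]; rewrite nth_rcons ifT //; lia.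
split.
- case; rewrite all_rcons => /andP [_ valid_w] [prod_w prefixes].
  have [Hs Di] : NCperm s /\ nc_descent s i.
    have := prefixes (size w).+1; rewrite size_rcons leqnn take_oversize ?size_rcons //.
    by rewrite prod_w nth_rcons ltnn eqxx => /(_ isT).
  split=> //; split=> //; split; first by rewrite -prod_w wprod_rcons pcomp_stpK.
  move=> k /andP [k0 kw]; have := prefixes k.
  by rewrite size_rcons k0 (leqW kw) prefix // nth_prefix ?k0 // => /(_ isT).
- case=> [[valid_w [prod_w prefixes]] Hs Di].
  split; first by rewrite all_rcons valid_w andbT; apply: nc_descent_valid Di.
  split; first by rewrite wprod_rcons prod_w pcomp_stpK.
  move=> k; rewrite size_rcons => /andP [k0]; rewrite leq_eqVlt => /orP [/eqP ->|kw].
    by rewrite take_oversize ?size_rcons // wprod_rcons prod_w pcomp_stpK nth_rcons ltnn eqxx.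
  by rewrite prefix ?nth_prefix ?k0 //; apply: prefixes; rewrite k0.
Qed.

Lemma RedNC_swap s w i j : i.+1 < j \/ j.+1 < i ->
  RedNC s (rcons (rcons w i) j) -> RedNC s (rcons (rcons w j) i).
Proof.
move=> far /RedNC_rcons [/RedNC_rcons [R Hsj Dji] Hs Dj].
move/or_comm: (far) => far'.
have Di : nc_descent s i.
  by rewrite -(pcomp_stpK s j); apply: nc_descent_stp_far; rewrite ?pcomp_stpK.
have Dij : nc_descent (pcomp s (stp n i)) j by apply: nc_descent_stp_far => //; case: Di.
apply/RedNC_rcons; split=> //; apply/RedNC_rcons; split=> //; last by case: Di.
by rewrite pcomp_stpC.
Qed.

Lemma RedNC_comm_move s w w' : comm_move w w' -> RedNC s w -> RedNC s w'.
Proof.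
case=> a [b [i [j [far [-> ->]]]]]; elim/last_ind: b s => [|b x IHb] s.
  have E x y : a ++ [:: x; y] ++ [::] = rcons (rcons a x) y by rewrite cats0 -!cats1 -catA.
  by rewrite !E; apply: RedNC_swap.
by rewrite -!rcons_cat => /RedNC_rcons [R Hs Dx]; apply/RedNC_rcons; split=> //; apply: IHb.
Qed.

Lemma RedNC_exists s : NCperm s -> exists w, RedNC s w.
Proof.
have [k] := ubnP (perm_length s); elim: k s => // k IHk s lt_sk Hs.
have [->|s1] := eqVneq s 1%g; first by exists [::]; apply/RedNC_nil.
have [i [Hsi lt_si]] := nc_descent_exists Hs s1.
have [w R] := IHk _ (leq_trans lt_si lt_sk) Hsi.
by exists (rcons w i); apply/RedNC_rcons; split=> //; split.
Qed.

Local Notation comm_equiv := (clos_refl_trans (seq nat) comm_move).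

Lemma comm_equiv_rcons x w w' : comm_equiv w w' -> comm_equiv (rcons w x) (rcons w' x).
Proof. exact: (clos_rt_map (fun u v => @comm_move_rcons u v x)). Qed.

Lemma RedNC_connected s w0 w : NCperm s -> RedNC s w0 -> RedNC s w -> comm_equiv w0 w.
Proof.
have [k] := ubnP (perm_length s); elim: k s w0 w => // k IHk s w0 w lt_sk Hs.
case/lastP: w0 => [|w0 i]; case/lastP: w => [|w j].
- by move=> _ _; apply: rt_refl.
- by move=> /RedNC_nil -> /RedNC_rcons [_ _ [_]]; rewrite perm_length1.
- by move=> /RedNC_rcons [_ _ [_]] + /RedNC_nil s1; rewrite s1 perm_length1.
move=> /RedNC_rcons [R0 _ [Hsi lt_si]] /RedNC_rcons [R _ [Hsj lt_sj]].
have IHi := IHk _ _ _ (leq_trans lt_si lt_sk) Hsi.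
have IHj := IHk _ _ _ (leq_trans lt_sj lt_sk) Hsj.
have [eq_ij|neq] := eqVneq i j; first by subst j; apply: comm_equiv_rcons; apply: IHi.
have far := nc_descent_far Hs (conj Hsi lt_si) (conj Hsj lt_sj) neq.
move/or_comm: (far) => far'.
have Dij := nc_descent_stp_far far Hs Hsi (conj Hsj lt_sj).
have Dji := nc_descent_stp_far far' Hs Hsj (conj Hsi lt_si).
have [v Rv] := RedNC_exists (proj1 Dij).
have Rvj : RedNC (pcomp s (stp n i)) (rcons v j) by apply/RedNC_rcons.
have Rvi : RedNC (pcomp s (stp n j)) (rcons v i) by apply/RedNC_rcons; rewrite -pcomp_stpC.
apply: rt_trans (comm_equiv_rcons i (IHi _ _ R0 Rvj)) _.
apply: rt_trans (clos_rt_sym (@comm_move_sym) (comm_equiv_rcons j (IHj _ _ R Rvi))).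
by apply: rt_step; exists v, [::], j, i; rewrite -!cats1 -!catA.
Qed.

End NoncrossingWords.

Theorem proposition7p12 (n : nat) (s : 'S_n) :
  NCperm s ->
  (exists w, RedNC s w) /\
  (forall w0, RedNC s w0 ->
     forall w, RedNC s w <-> clos_refl_trans (seq nat) comm_move w0 w).
Proof.
move=> Hs; split=> [|w0 R0 w]; first exact: RedNC_exists.
split=> [R|]; first exact: RedNC_connected R0 R.
by move=> C; apply: (clos_rt_invariant _ C R0) => u v; apply: RedNC_comm_move.
Qed.
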